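(* Let $k\ge 4$, $n=2k-1$, $\lambda\in\overline{\mathcal{U}}_{T_n}$, and let $Y=\mathrm{KN}(S_\lambda)$, with $R_i$ its $i$-th row and $C_j$ its $j$-th column. Write the elements of $S_\lambda$ increasingly as $0=s_0<s_1<\cdots$ and let $z$ be the index with $s_z=n-2$. Then $\#R_i=\#C_i+1$ for every $1\le i\le z$, and $\#R_i=\#C_{i+1}$ for every $z+1\le i\le n-2$.
   Context: A partition of $N$ into distinct parts is a sequence $\lambda=(\lambda_1<\dots<\lambda_t)$ of positive integers with sum $N$ and $t\ge 2$, identified with its set of parts. Missing parts: $\mathcal{M}_\lambda=\{1,\dots,\lambda_t\}\setminus\lambda$. $\lambda$ is refinable if two distinct missing parts sum to a part of $\lambda$, unrefinable otherwise; $\mathcal{U}_N$ is the set of unrefinable partitions of $N$. An element of $\mathcal{U}_N$ is maximal if its largest part is the maximum of the largest parts of elements of $\mathcal{U}_N$; $\widetilde{\mathcal{U}}_N$ is the set of these and $\overline{\mathcal{U}}_N=\{\lambda\in\widetilde{\mathcal{U}}_N:\#\mathcal{M}_\lambda=\lfloor\lambda_t/2\rfloor\}$. $T_n=n(n+1)/2$. For $\lambda\in\overline{\mathcal{U}}_{T_n}$ (with $n=2k-1$, $k\ge 4$) one knows $\lambda_t=2n-4$, $t=n-2$ and $n-2\notin\lambda$. $S_\lambda=\mathbb{N}_0\setminus\lambda$. The Keith–Nath transformation sends a set $S\subseteq\mathbb{N}_0$ with $0\in S$ and finite complement to the Young diagram $\mathrm{KN}(S)$ whose boundary is the lattice path that,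 starting at the origin, takes for $j=0,1,\dots,\max(\mathbb{N}_0\setminus S)$ an east step if $j\in S$ and a north step otherwise. Diagrams are in English convention: rows numbered from the top, columns from the left; $\#R_i$, $\#C_j$ denote numbers of cells. *)

From mathcomp Require Import all_boot.
Set Implicit Arguments. Unset Strict Implicit. Unset Printing Implicit Defensive.

Definition is_dpart (N : nat) (l : seq nat) : bool :=
  [&& sorted ltn l, 0 \notin l, sumn l == N & 1 < size l].

Definition lmax (l : seq nat) : nat := last 0 l.

Definition missing (l : seq nat) : seq nat :=
  [seq i <- iota 1 (lmax l) | i \notin l].

Definition refinable (l : seq nat) : bool :=
  has (fun a => has (fun b => (a != b) && (a + b \in l)) (missing l)) (missing l).

Definition unrefinable (N : nat) (l : seq nat) : bool :=
  is_dpart N l && ~~ refinable l.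

Definition maximal_unref (N : nat) (l : seq nat) : Prop :=
  unrefinable N l /\ forall mu, unrefinable N mu -> lmax mu <= lmax l.

Definition overU (N : nat) (l : seq nat) : Prop :=
  maximal_unref N l /\ size (missing l) = (lmax l)./2.

Definition tri (n : nat) : nat := (n * n.+1)./2.

Definition S_of (l : seq nat) : pred nat := fun x => x \notin l.

(* Keith--Nath: the lattice path takes, for j = 0..m (m = max of the
   complement of S), an east step if j \in S and a north step otherwise.
   Each north step at j bounds a row whose length is the number of east
   steps before it.  In English convention the top row is the last north
   step, so rows listed top to bottom are: *)
Definition KN_rows (S : pred nat) (m : nat) : seq nat :=
  rev [seq count S (iota 0 j) | j <- iota 0 m.+1 & ~~ S j].

(* cell (i, j) (row i from the top, column j from the left, 1-indexed) *)
Definition KN_cell (S : pred nat) (m : nat) (i j : nat) : bool :=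
  [&& 1 <= i, i <= size (KN_rows S m), 1 <= j & j <= nth 0 (KN_rows S m) i.-1].

(* #R_i and #C_j: all rows have length <= m+1 and there are <= m+1 rows *)
Definition KN_row_card (S : pred nat) (m i : nat) : nat :=
  count (fun j => KN_cell S m i j) (iota 1 m.+1).
Definition KN_col_card (S : pred nat) (m j : nat) : nat :=
  count (fun i => KN_cell S m i j) (iota 1 m.+1).

(** Let [m] be the largest part of [lam]. Unrefinability forces every pair
    [{a, m - a}] with [a <> m - a] to meet [lam]; as exactly [m / 2] parts are
    missing, each such pair contains exactly one part and, for [m] even, [m / 2]
    is missing. Writing [m = 2h + 1 + b], summing the parts pairwise gives
    [T_n = m + T_h + E] with [E = sum_(a <= h, a missing) (m - 2a)], while the
    unrefinable partition [(1, ..., n - 3, n + 1, 2n - 4)] shows [m >= 2n - 4];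
    the gaps [m - 2a] then leave only [m = 2n - 4]. So, with [c = n - 2], an
    integer [x <> c] in [0, 2c] lies in [S_lam] exactly when [2c - x] is a part.
    Let [g y] count the elements of [S_lam] below [y]. Row [i] of the diagram
    has length [g p] for the [i]-th largest part [p], and column [g x + 1], for
    [x] in [S_lam], has one cell for each part above [x]. The reflection
    [x |-> 2c - x] turns one count into the other; the only element of [S_lam]
    it does not pair up is [c], whence the shift by one on either side of [c]. *)

From mathcomp Require Import all_boot zify.
Set Implicit Arguments. Unset Strict Implicit. Unset Printing Implicit Defensive.

Lemma sum_pairs h (b : bool) (F : nat -> nat) :
  \sum_(1 <= a < h.*2.+1 + b) F a =
  \sum_(1 <= a < h.+1) (F a + F (h.*2.+1 + b - a)) + b * F h.+1.
Proof.
elim: h F => [|h IH] F.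
  by case: b; rewrite ?addn1 ?addn0 ?big_nat1 !big_geq //= mul1n.
have -> : h.+1.*2.+1 + b = (h.*2.+1 + b).+2 by rewrite doubleS.
rewrite big_nat_recl // big_nat_recr ?leq_addr //= IH.
rewrite [in RHS]big_nat_recl //.
have -> : \sum_(1 <= a < h.+1) (F a.+1 + F ((h.*2.+1 + b).+2 - a.+1)) =
          \sum_(1 <= a < h.+1) (F a.+1 + F (h.*2.+1 + b - a).+1).
  by apply: eq_big_nat => a /andP[a1 ah]; congr (_ + F _); lia.
rewrite subn1 /=; lia.
Qed.

Lemma sum_nat_saturate lo hi (t u : nat -> nat) :
  (forall a, lo <= a < hi -> t a <= u a) ->
  \sum_(lo <= a < hi) u a <= \sum_(lo <= a < hi) t a ->
  forall a, lo <= a < hi -> t a = u a.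
Proof.
move=> tu; rewrite -subn_eq0 !big_seq -sumnB; last first.
  by move=> a; rewrite mem_index_iota; apply: tu.
rewrite sum_nat_seq_eq0 => /allP sat a a_in.
have := sat a; rewrite mem_index_iota a_in => /(_ isT)/eqP.
by have := tu a a_in; lia.
Qed.

Lemma pair_excess_addb_neq2 h (b : bool) (x : nat -> bool) :
  \sum_(1 <= a < h.+1) (h.*2.+1 + b - a.*2) * x a + b != 2.
Proof.
case: h => [|h]; first by rewrite big_geq //; case: b.
rewrite big_nat_recr //=; set gaps := \sum_(1 <= a < h.+1) _.
have gaps0_or_ge3 : (gaps == 0) || (3 <= gaps).
  rewrite /gaps big_seq; apply: (big_ind (fun S => (S == 0) || (3 <= S))) => //.
    by move=> S T /orP[/eqP->|S3] /orP[/eqP->|T3]; rewrite ?addn0 ?S3 ?T3 ?orbT //; lia.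
  by move=> a; rewrite mem_index_iota; case: (x a); rewrite ?muln0 ?muln1 //=; lia.
clearbody gaps; move: gaps0_or_ge3.
by case: (x h.+1); case: b; rewrite ?muln0 ?muln1; lia.
Qed.

Lemma tri_double n : (tri n).*2 = n * n.+1.
Proof. by rewrite /tri -[RHS](odd_double_half (n * n.+1)) oddM andbN. Qed.

Lemma sum_id_tri h : \sum_(1 <= a < h.+1) a = tri h.
Proof. by rewrite /tri mulnC -bin2 -bin2_sum [in RHS]big_ltn. Qed.

Lemma count_sum T (P : pred T) s : count P s = \sum_(x <- s) P x.
Proof. by rewrite -sumn_count sumnE big_map. Qed.

Lemma count_iota_rev (P : pred nat) N :
  count P (iota 0 N.+1) = count (fun y => P (N - y)) (iota 0 N.+1).
Proof.
have iotaE : iota 0 N.+1 = index_iota 0 N.+1 by rewrite /index_iota subn0.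
by rewrite iotaE !count_sum big_nat_rev; apply: eq_bigr => y _; rewrite add0n subSS.
Qed.

Lemma sorted_le_last s x : sorted ltn s -> x \in s -> x <= last 0 s.
Proof.
case: s => // y s; elim: s y x => [|z s IH] y x /=; first by rewrite inE => _ /eqP->.
case/andP=> yz zs; rewrite inE => /predU1P[->|]; last exact: IH.
exact: leq_trans (ltnW yz) (IH z z zs (mem_head z s)).
Qed.

Lemma filter_iota_sorted s lo n : sorted ltn s ->
  (forall x, x \in s -> lo <= x < lo + n) -> [seq x <- iota lo n | x \in s] = s.
Proof.
move=> s_sorted s_range; apply: (irr_sorted_eq ltn_trans ltnn) => //.
  exact: (sorted_filter ltn_trans _ (iota_ltn_sorted lo n)).
by move=> x; rewrite mem_filter mem_iota andb_idr // => /s_range.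
Qed.

Lemma count_gt_sorted s p : sorted ltn s -> p \in s ->
  count (fun q => p < q) s = size s - (index p s).+1.
Proof.
elim: s => // y s IH /= ys_path; have s_sorted := path_sorted ys_path.
have /allP y_min := order_path_min ltn_trans ys_path.
have [-> _|p_neq_y] := eqVneq p y; rewrite /= ?eqxx.
  by rewrite ltnn subSS subn0; apply/eqP; rewrite -all_count; apply/allP.
rewrite inE (negPf p_neq_y) => ps; have /ltnW yp := y_min p ps.
by rewrite ltnNge yp IH // eq_sym (negPf p_neq_y) subSS.
Qed.

Lemma nth_count_gt s p : sorted ltn s -> p \in s ->
  nth 0 s (size s - (count (fun q => p < q) s).+1) = p.
Proof.
move=> s_sorted ps; have := index_mem p s; rewrite ps count_gt_sorted // => p_idx.
by rewrite subnSK // subKn ?nth_index // ltnW.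
Qed.

(** * Unrefinable partitions of triangular numbers *)

Section SortedParts.
Variable l : seq nat.
Hypotheses (l_sorted : sorted ltn l) (l_pos : 0 \notin l).

Lemma part_range x : x \in l -> 0 < x <= lmax l.
Proof.
move=> xl; rewrite sorted_le_last // andbT lt0n.
by apply: contraNneq l_pos => x0; rewrite -x0.
Qed.

Lemma sumn_parts : sumn l = \sum_(1 <= a < (lmax l).+1) a * (a \in l).
Proof.
rewrite -{1}(@filter_iota_sorted l 1 (lmax l)) // => [|x /part_range]; last by lia.
rewrite sumnE big_filter big_mkcond /index_iota subSS subn0.
by apply: eq_bigr => a _; case: (a \in l); rewrite ?muln1 ?muln0.
Qed.

End SortedParts.

Lemma lmax_mem l : l != [::] -> lmax l \in l.
Proof. by case: l => // y s _; apply: mem_last. Qed.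

Lemma size_missing l : lmax l \in l ->
  size (missing l) = \sum_(1 <= a < lmax l) (a \notin l).
Proof.
move=> lmax_in; have [m0|m_pos] := posnP (lmax l); first by rewrite /missing m0 big_geq.
rewrite size_filter count_sum -{1}(subn0 (lmax l)) -subSS big_nat_recr //=.
by rewrite lmax_in addn0.
Qed.

Lemma unrefinable_pair l p a : ~~ refinable l -> p \in l -> p <= lmax l ->
  0 < a < p -> a != p - a -> (a \in l) || (p - a \in l).
Proof.
move=> /hasPn unref pl p_le a_range a_neq; apply/negPn/negP => /norP[al pal].
have miss x : x \notin l -> 0 < x < p -> x \in missing l.
  by move=> xl x_range; rewrite mem_filter xl mem_iota; lia.
have /hasPn/(_ (p - a)) := unref a (miss a al a_range).
by rewrite miss ?a_neq ?subnKC ?pl //; lia.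
Qed.

Definition mu n := iota 1 (n - 3) ++ [:: n.+1; (n - 2).*2].

Lemma lmax_mu n : lmax (mu n) = (n - 2).*2.
Proof. by rewrite /lmax last_cat. Qed.

Lemma unrefinable_mu n : 6 <= n -> unrefinable (tri n) (mu n).
Proof.
move=> n6; apply/andP; split.
  apply/and4P; split.
  - rewrite (sorted_pairwise ltn_trans) pairwise_cat -(sorted_pairwise ltn_trans).
    rewrite iota_ltn_sorted /= andbT; apply/andP; split; last lia.
    by apply/allrelP => x y; rewrite mem_iota !inE => ? /orP[] /eqP ->; lia.
  - by rewrite mem_cat mem_iota !inE; lia.
  - have iotaE : iota 1 (n - 3) = index_iota 1 (n - 3).+1 by rewrite /index_iota subn1.
    rewrite sumn_cat sumnE iotaE sum_id_tri; apply/eqP/double_inj.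
    rewrite /= !doubleD !tri_double; nia.
  - by rewrite size_cat /=; lia.
rewrite /refinable /missing lmax_mu; apply/hasPn => a; rewrite mem_filter mem_iota.
move=> /andP[a_notin a_range]; apply/hasPn => b; rewrite mem_filter mem_iota.
move=> /andP[b_notin b_range]; apply/negP => /andP[/eqP a_neq_b].
move: a_notin b_notin; rewrite !mem_cat !mem_iota !inE; lia.
Qed.

Definition complementary (l : seq nat) (m : nat) : Prop :=
  forall x, x <= m -> x.*2 != m -> (x \notin l) = (m - x \in l).

Section Saturation.
Variable l : seq nat.
Hypotheses (l_pos : 0 \notin l) (lmax_in : lmax l \in l) (l_unref : ~~ refinable l).
Hypothesis missing_half : size (missing l) = (lmax l)./2.
Variables (h : nat) (b : bool).
Hypothesis lmaxE : lmax l = h.*2.+1 + b.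

Lemma pairs_size : h + b =
  \sum_(1 <= a < h.+1) ((a \notin l) + (lmax l - a \notin l)) + b * (h.+1 \notin l).
Proof.
by have := size_missing lmax_in; rewrite missing_half {2}lmaxE sum_pairs -lmaxE; lia.
Qed.

Lemma pair_one_missing a : 0 < a < h.+1 -> (a \notin l) + (lmax l - a \notin l) = 1.
Proof.
move: a; apply: (@sum_nat_saturate 1 h.+1 _ (fun=> 1)) => [a a_range|].
  have := unrefinable_pair l_unref lmax_in (leqnn _) (a := a); rewrite lmaxE.
  by case: (a \in l); case: (_ \in l) => //= /(_ _ _)/negP; lia.
have mid_le : b * (h.+1 \notin l) <= b by case: b; case: (_ \in l).
by rewrite sum_nat_const_nat; move: pairs_size mid_le; lia.
Qed.

Lemma middle_missing : b -> h.+1 \notin l.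
Proof.
have := pairs_size; rewrite (eq_big_nat _ _ pair_one_missing) sum_nat_const_nat.
by case: b => //; case: (_ \in l) => //=; lia.
Qed.

Lemma complementary_lmax : complementary l (lmax l).
Proof.
have pair_xor a : 0 < a < lmax l -> a.*2 != lmax l -> (a \in l) (+) (lmax l - a \in l).
  move=> a_range a_neq; have [a_le|a_gt] := leqP a h.
    by have := @pair_one_missing a; case: (a \in l); case: (_ \in l) => //=; lia.
  have := @pair_one_missing (lmax l - a); rewrite subKn; last lia.
  by case: (a \in l); case: (_ \in l) => //=; lia.
move=> x x_le x_neq; have [->|x_pos] := posnP x; first by rewrite subn0 lmax_in.
have [->|x_lt] := eqVneq x (lmax l); first by rewrite subnn (negPf l_pos) lmax_in.
by have := pair_xor x; case: (x \in l); case: (_ \in l) => //=; lia.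
Qed.

Lemma sumn_pairs : sorted ltn l ->
  sumn l = lmax l + tri h + \sum_(1 <= a < h.+1) (lmax l - a.*2) * (a \notin l).
Proof.
move=> l_sorted; rewrite sumn_parts // big_nat_recr ?lmaxE //= -lmaxE lmax_in muln1.
rewrite addnC -addnA; congr (_ + _); rewrite {1}lmaxE sum_pairs -lmaxE.
have -> : b * (h.+1 * (h.+1 \in l)) = 0.
  by case: b middle_missing => // /(_ isT)/negPf->; rewrite muln0.
rewrite addn0 -sum_id_tri -big_split; apply: eq_big_nat => a a_range /=.
have := pair_one_missing a_range.
by case: (a \in l); case: (_ \in l) => //=; rewrite ?muln0 ?muln1; lia.
Qed.

End Saturation.

Lemma tri_pair_decomposition n h (b : bool) E : 6 <= n -> (n - 2).*2 <= h.*2.+1 + b ->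
  tri n = h.*2.+1 + b + tri h + E -> E + b != 2 -> h = n - 3 /\ b.
Proof.
move=> n6 m_ge sumE E_neq; have := tri_double n; have := tri_double h.
rewrite sumE => tri_h tri_n.
have h_le : h <= n - 2.
  rewrite leqNgt; apply/negP => h_gt.
  have : (n - 1) * n <= h * h.+1 by apply: leq_mul; lia.
  lia.
have [h_eq|h_neq] := eqVneq h (n - 2); last by split; lia.
(* For [h = n - 2] the identity forces [E + b = 2]. *)
by move: E_neq; rewrite h_eq in tri_h tri_n; nia.
Qed.

Lemma overU_tri_shape n l : 6 <= n -> overU (tri n) l ->
  [/\ sorted ltn l, 0 \notin l, lmax l = (n - 2).*2,
      complementary l (lmax l) & n - 2 \notin l].
Proof.
move=> n6 [[/andP[/and4P[l_sorted l_pos /eqP l_sum l_size] l_unref] l_max] missing_half].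
have lmax_ge : (n - 2).*2 <= lmax l by rewrite -(lmax_mu n); apply/l_max/unrefinable_mu.
have lmax_in : lmax l \in l by apply: lmax_mem; apply: contraTneq l_size => ->.
have [h [b lmaxE]] : exists h (b : bool), lmax l = h.*2.+1 + b.
  by exists ((lmax l).-1./2), (~~ odd (lmax l)); have := part_range l_sorted l_pos lmax_in; lia.
have sumE := sumn_pairs l_pos lmax_in l_unref missing_half lmaxE l_sorted.
rewrite l_sum lmaxE in sumE; rewrite lmaxE in lmax_ge.
have [hE b_true] := tri_pair_decomposition n6 lmax_ge sumE
  (pair_excess_addb_neq2 h b (fun a => a \notin l)).
have -> : n - 2 = h.+1 by lia.
split=> //; first by rewrite lmaxE; lia.
  exact: (complementary_lmax l_pos lmax_in l_unref missing_half lmaxE).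
exact: (middle_missing l_pos lmax_in l_unref missing_half lmaxE b_true).
Qed.

(** * Keith--Nath diagrams *)

Definition card_below (S : pred nat) (q : nat) : nat := count S (iota 0 q).

Section CardBelow.
Variable S : pred nat.

Lemma card_belowS q : card_below S q.+1 = card_below S q + S q.
Proof. by rewrite /card_below -addn1 iotaD count_cat /= addn0. Qed.

Lemma card_below_le q : card_below S q <= q.
Proof. by rewrite -{2}(size_iota 0 q) count_size. Qed.

Lemma card_below_mono : {homo card_below S : p q / p <= q}.
Proof. by move=> p q pq; rewrite /card_below -(subnKC pq) iotaD count_cat leq_addr. Qed.

Lemma card_below_attained N v : v < card_below S N ->
  exists x, [/\ x < N, S x & card_below S x = v].
Proof.
elim: N => [|N IH]; first by rewrite /card_below.
rewrite card_belowS; have [v_lt|v_ge] := ltnP v (card_below S N).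
  by case: (IH v_lt) => x [xN Sx <-]; exists x; split => //; lia.
by case SN: (S N) => /= v_lt; [exists N; split => //; lia | lia].
Qed.

Lemma card_below_lt x q : S x -> ~~ S q -> (card_below S x < card_below S q) = (x < q).
Proof.
move=> Sx Sq; have [xq|qx] := ltnP x q.
  by have := card_below_mono xq; rewrite card_belowS Sx; lia.
have /card_below_mono : q.+1 <= x by rewrite ltn_neqAle qx andbT; apply: contraNneq Sq => ->.
by rewrite card_belowS (negPf Sq); lia.
Qed.

End CardBelow.

Lemma card_below_split (S : pred nat) c k : S c ->
  card_below S k = count (fun y => S y && (y != c)) (iota 0 k) + (c < k).
Proof.
move=> Sc; have -> : (c < k) = (c \in iota 0 k) by rewrite mem_iota.
rewrite /card_below -(count_uniq_mem _ (iota_uniq 0 k)).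
elim: (iota 0 k) => //= y s ->; case: (eqVneq y c) => [->|]; rewrite ?Sc /=; lia.
Qed.

Lemma count_iota1_le r N : r <= N -> count (fun j => j <= r) (iota 1 N) = r.
Proof. by move=> rN; rewrite -size_filter (filter_iota_ltn 1 rN) size_iota. Qed.

Section KeithNath.
Variables (S : pred nat) (m : nat).
Local Notation rows := (KN_rows S m).

Lemma size_KN_rows : size rows <= m.+1.
Proof. by rewrite size_rev size_map size_filter -{2}(size_iota 0 m.+1) count_size. Qed.

Lemma KN_rows_le r : r \in rows -> r <= m.
Proof.
rewrite mem_rev => /mapP[j]; rewrite mem_filter mem_iota ltnS => /andP[_ /andP[_ jm]] ->.
exact: leq_trans (card_below_le S j) jm.
Qed.

Lemma KN_row_cardE i : 0 < i <= size rows -> KN_row_card S m i = nth 0 rows i.-1.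
Proof.
move=> i_range; rewrite /KN_row_card /KN_cell.
have r_le : nth 0 rows i.-1 <= m.+1.
  by apply/leqW/KN_rows_le/mem_nth; case/andP: i_range => i_pos; rewrite prednK.
case/andP: i_range => i_pos i_le.
rewrite -[RHS](count_iota1_le r_le); apply: eq_in_count => j.
by rewrite mem_iota i_pos i_le /= => /andP[-> _].
Qed.

Lemma KN_col_cardE j : 0 < j -> KN_col_card S m j = count (fun r => j <= r) rows.
Proof.
move=> j_pos; rewrite /KN_col_card /KN_cell.
rewrite -(subnKC size_KN_rows) iotaD count_cat.
rewrite [X in _ + X](eq_in_count (a2 := pred0)) ?count_pred0 ?addn0; last first.
  by move=> i; rewrite mem_iota; apply: contraTF => /and4P[]; lia.
rewrite (iotaDl 1 0) count_map -[in RHS](mkseq_nth 0 rows) count_map.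
by apply: eq_in_count => i; rewrite mem_iota j_pos /= add1n => ->.
Qed.

End KeithNath.

Section ComplementaryDiagram.
Variables (lam : seq nat) (c : nat).
Hypotheses (lam_sorted : sorted ltn lam) (lam_pos : 0 \notin lam) (c_pos : 0 < c).
Hypotheses (lmax_lam : lmax lam = c.*2) (lam_compl : complementary lam c.*2).
Hypothesis c_notin : c \notin lam.

Local Notation S := (S_of lam).
Local Notation m := c.*2.
Local Notation g := (card_below S).

Lemma lmax_in_lam : m \in lam.
Proof. by rewrite -[m]subn0 -lam_compl //; lia. Qed.

Lemma lam_filter : [seq j <- iota 0 m.+1 | ~~ S j] = lam.
Proof.
rewrite (eq_filter (a2 := mem lam)) => [|j]; last exact: negbK.
by apply: filter_iota_sorted => // x /(part_range lam_sorted lam_pos); lia.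
Qed.

Lemma count_gt_compl x : x <= m -> count (fun q => x < q) lam + (c < m - x) = g (m - x).
Proof.
(* Under [q |-> m - q], the parts above [x] become the elements of [S]
   below [m - x], except [c]. *)
move=> x_le; have Sc : S c := c_notin.
have mx_le : m - x <= m.+1 by lia.
rewrite (card_below_split _ Sc) -(filter_iota_ltn 0 mx_le) count_filter.
rewrite -[in LHS]lam_filter count_filter count_iota_rev; congr (_ + _).
apply: eq_in_count => y; rewrite mem_iota add0n ltnS => /andP[_ y_le] /=.
have [->|y_neq] := eqVneq y c; first by rewrite (_ : m - c = c) ?Sc ?andbF //; lia.
rewrite negbK -lam_compl // ?andbT 1?andbC; last lia.
by congr (_ && _); lia.
Qed.

Lemma size_lam_card_below_m : size lam = c /\ g m = c.+1.
Proof.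
have all_pos : count (fun q => 0 < q) lam = size lam.
  by apply/eqP; rewrite -all_count; apply/allP => q /(part_range lam_sorted lam_pos)/andP[].
have lam_size : count (predC S) (iota 0 m.+1) = size lam by rewrite -size_filter lam_filter.
have S_size := count_predC S (iota 0 m.+1).
have S_m : S m = false by rewrite /S_of lmax_in_lam.
rewrite -/(g m.+1) card_belowS lam_size size_iota S_m addn0 in S_size.
have := count_gt_compl (leq0n m); rewrite subn0 all_pos; lia.
Qed.

Lemma KN_rows_lam : KN_rows S m = rev (map g lam).
Proof. by rewrite /KN_rows lam_filter. Qed.

Lemma row_card_lam i : 0 < i <= c -> KN_row_card S m i = g (nth 0 lam (c - i)).
Proof.
move=> i_range; have [size_c _] := size_lam_card_below_m.
rewrite KN_row_cardE KN_rows_lam ?size_rev ?size_map ?size_c //.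
rewrite nth_rev ?size_map ?size_c; last lia.
by rewrite (nth_map 0) ?size_c; [congr (g (nth 0 lam _)) | ]; lia.
Qed.

Lemma col_card_lam j : 0 < j -> KN_col_card S m j = count (fun q => j <= g q) lam.
Proof. by move=> j_pos; rewrite KN_col_cardE // KN_rows_lam count_rev count_map. Qed.

Lemma col_card_next x : S x -> KN_col_card S m (g x).+1 = count (fun q => x < q) lam.
Proof.
move=> Sx; rewrite col_card_lam //; apply: eq_in_count => q q_in /=.
by apply: card_below_lt => //; apply/negPn.
Qed.

Lemma KN_row_col_reflect x : S x -> x != c -> x <= m ->
  KN_row_card S m (g x - (c < x)).+1 = g (m - x) /\
  KN_col_card S m (g x).+1 + (x < c) = g (m - x).
Proof.
move=> Sx x_neq x_le; have [size_c _] := size_lam_card_below_m.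
have p_in : m - x \in lam by rewrite -lam_compl //; lia.
have := count_gt_compl (leq_subr x m); rewrite subKn // => rank.
(* By [rank], [m - x] is the [(g x - (c < x)).+1]-th largest part. *)
split.
  have := count_gt_sorted lam_sorted p_in; have := nth_count_gt lam_sorted p_in.
  rewrite size_c => nthE rankE; rewrite row_card_lam; last lia.
  by rewrite (_ : c - _ = c - (count (fun q => m - x < q) lam).+1) ?nthE //; lia.
by rewrite col_card_next //; have := count_gt_compl x_le; lia.
Qed.

Lemma KN_row_card_upper i : 0 < i <= g c -> KN_row_card S m i = KN_col_card S m i + 1.
Proof.
move=> i_range; have [|x [x_lt Sx gx]] := @card_below_attained S c i.-1; first lia.
have [x_neq x_le] : x != c /\ x <= m by split; lia.
have [row col] := KN_row_col_reflect Sx x_neq x_le.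
have i_eq : (g x - (c < x)).+1 = i by rewrite gx (_ : c < x = false) ?subn0 ?prednK //; lia.
by rewrite -{1}i_eq row -col gx prednK ?x_lt //; lia.
Qed.

Lemma KN_row_card_lower i : g c < i <= c -> KN_row_card S m i = KN_col_card S m i.+1.
Proof.
move=> i_range; have [_ g_m] := size_lam_card_below_m.
have [|x [x_lt Sx gx]] := @card_below_attained S m i; first lia.
have c_lt : c < x by rewrite ltnNge; apply: contraTN i_range => /(card_below_mono S); lia.
have [|row col] := KN_row_col_reflect Sx _ (ltnW x_lt); first lia.
rewrite c_lt gx subn1 prednK in row; last lia.
by rewrite row -col gx (_ : x < c = false) ?addn0 //; lia.
Qed.

End ComplementaryDiagram.

Theorem lemma3p6 (k n : nat) (lam : seq nat) (z : nat) :
  4 <= k -> n = 2 * k - 1 ->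
  overU (tri n) lam ->
  z = count (S_of lam) (iota 0 (n - 2)) ->
  (forall i, 1 <= i <= z ->
     KN_row_card (S_of lam) (lmax lam) i = KN_col_card (S_of lam) (lmax lam) i + 1) /\
  (forall i, z + 1 <= i <= n - 2 ->
     KN_row_card (S_of lam) (lmax lam) i = KN_col_card (S_of lam) (lmax lam) i.+1).
Proof.
move=> k_ge4 nE lam_overU ->.
have [|lam_sorted lam_pos lmaxE compl notin] := @overU_tri_shape n lam _ lam_overU; first lia.
rewrite lmaxE in compl *; have c_pos : 0 < n - 2 by lia.
split=> i i_range; first exact: KN_row_card_upper.
by apply: KN_row_card_lower => //; rewrite -addn1.
Qed.
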